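(* Let $(\mathbb{X},d)$ be a complete metric space, let $F=(\mathbb{X};f_1,\dots,f_N)$ be an invertible iterated function system, and let $A$ be a point-fibred attractor of $F$ with basin $B$ and fast basin $\widehat{B}=\bigcup_{k\ge0}(F^* )^k(A)$. Then $F^*(\widehat{B})=\widehat{B}$, and $\widehat{B}$ is the smallest subset of $\mathbb{X}$ that contains $A$ and is invariant under $F^*$, i.e. $\widehat{B}=\bigcap\{D\subseteq\mathbb{X}: F^*(D)=D,\ A\subseteq D\}$. Moreover: \begin{enumerate} \item if $A^o\neq\emptyset$, then $B\subseteq\widehat{B}$; \item if $A^o=\emptyset$, then $\widehat{B}^o=\emptyset$. \end{enumerate}
   Context: $S^o$ denotes the interior of $S$. An IFS $F=(\mathbb{X};f_1,\dots,f_N)$ consists of continuous maps $f_i:\mathbb{X}\to\mathbb{X}$; it is invertible if each $f_i$ is a homeomorphism, and then $F^*=(\mathbb{X};f_1^{-1},\dots,f_N^{-1})$ with $F^*(X)=\bigcup_i f_i^{-1}(X)$ and $(F^* )^k$ its $k$-fold iterate, $(F^* )^0(X)=X$. Similarly $F(X)=\bigcup_i f_i(X)$. A nonempty compact $A$ is an attractor of $F$ if $F(A)=A$ and there is an open $U\supset A$ with $F^k(S)\to A$ in the Hausdorff metric for every nonempty compact $S\subset U$; the basin $B$ is the union of all such open $U$. For $\omega\in[N]^\infty$ ($[N]=\{1,\dots,N\}$) let $f_{\omega|k}=f_{\omega_1}\circ\cdots\circ f_{\omega_k}$. $A$ is point-fibred if for every $\omega\in[N]^\infty$ and every nonempty compact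 $C\subset B$ the sequence $f_{\omega|k}(C)$ converges in the Hausdorff metric to a singleton independent of $C$. *)

From HB Require Import structures.
From mathcomp Require Import all_boot all_order all_algebra.
From mathcomp Require Import all_classical all_reals all_analysis.
Set Implicit Arguments. Unset Strict Implicit. Unset Printing Implicit Defensive.
Import Order.TTheory GRing.Theory Num.Theory.
Local Open Scope classical_set_scope.
Local Open Scope ring_scope.

Section IFS.
Variables (R : realType) (X : pseudoMetricType R).

(* A metric space: a pseudometric space that is Hausdorff (distinct points at
   positive distance).  Completeness is taken from completePseudoMetricType. *)

Definition enbhd (S : set X) (e : R) : set X :=
  [set y | exists2 a, S a & ball a e y].

(* Convergence in the Hausdorff metric (for nonempty compact sets):
   h(S k, A) -> 0. *)
Definition hconv (S : nat -> set X) (A : set X) : Prop :=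
  forall e : R, 0 < e ->
    \forall k \near \oo, S k `<=` enbhd A e /\ A `<=` enbhd (S k) e.

Definition nonempty_compact (S : set X) : Prop := S !=set0 /\ compact S.

Definition homeomorphism (f : X -> X) : Prop :=
  continuous f /\ exists g : X -> X, [/\ cancel f g, cancel g f & continuous g].

Variable N : nat.
Variable f : 'I_N -> X -> X.

Definition Fimg (S : set X) : set X := \bigcup_i (f i @` S).

(* F^*(S) = U_i f_i^{-1}(S) (preimages; f_i are homeomorphisms) *)
Definition Fstar (S : set X) : set X := \bigcup_i (f i @^-1` S).

Definition attracting_nbhd (A U : set X) : Prop :=
  [/\ open U, A `<=` U &
      forall S, nonempty_compact S -> S `<=` U -> hconv (fun k => iter k Fimg S) A].

Definition is_attractor (A : set X) : Prop :=
  [/\ nonempty_compact A, Fimg A = A & exists U, attracting_nbhd A U].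

Definition basin (A : set X) : set X :=
  \bigcup_(U in [set U | attracting_nbhd A U]) U.

(* f_{w|k} = f_{w_1} o ... o f_{w_k}  (words indexed from 0) *)
Fixpoint fword (w : nat -> 'I_N) (k : nat) : X -> X :=
  match k with
  | 0 => id
  | k'.+1 => fword w k' \o f (w k')
  end.

Definition point_fibred (A : set X) : Prop :=
  forall w : nat -> 'I_N, exists x : X,
    forall C, nonempty_compact C -> C `<=` basin A ->
      hconv (fun k => fword w k @` C) [set x].

Definition fast_basin (A : set X) : set X := \bigcup_k iter k Fstar A.

End IFS.

(* Since F(A) = A, every point of A has a preimage in A, so A is contained in
   F^*(A) and the iterates of F^* on A increase; their union is then
   F^*-invariant, and it lies in every F^*-invariant superset of A.
   If a is an interior point of A, following preimages backwards inside A gives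
   a word w and points p_k in A with f_{w|k}(p_k) = a.  For x in the basin,
   point-fibredness applied to A ∪ {x} makes f_{w|k}(x) and f_{w|k}(p_k) = a
   eventually as close as we like, so f_{w|k}(x) lies in A and x in the k-th
   iterate of F^* on A.  If A has empty interior it is closed and nowhere
   dense; preimages under homeomorphisms and finite unions keep this property,
   so the fast basin is a countable union of nowhere dense sets and has empty
   interior by Baire's theorem. *)
From HB Require Import structures.
From mathcomp Require Import all_boot all_order all_algebra.
From mathcomp Require Import all_classical all_reals all_analysis.
Import Order.TTheory GRing.Theory Num.Theory.
Local Open Scope classical_set_scope.
Local Open Scope ring_scope.

Section NowhereDense.
Context {T : topologicalType}.

Definition nowhere_dense (S : set T) : Prop :=
  forall V : set T, open V -> V !=set0 ->
    exists W, [/\ open W, W !=set0 & W `<=` V `&` ~` S].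

Lemma nowhere_denseS {S S' : set T} : S' `<=` S ->
  nowhere_dense S -> nowhere_dense S'.
Proof.
move=> S'S ndS V oV V0; have [W [oW W0 WV]] := ndS V oV V0.
exists W; split => // y /WV [Vy nSy]; split => //; exact: contra_not (@S'S y) nSy.
Qed.

Lemma nowhere_dense0 : nowhere_dense set0.
Proof. by move=> V oV V0; exists V; split => // y Vy; split. Qed.

Lemma nowhere_denseU {S S' : set T} :
  nowhere_dense S -> nowhere_dense S' -> nowhere_dense (S `|` S').
Proof.
move=> ndS ndS' V oV V0; have [W [oW W0 WV]] := ndS V oV V0.
have [W' [oW' W'0 W'W]] := ndS' W oW W0.
exists W'; split => // y /W'W [/WV [Vy nSy] nS'y]; split => // -[]//.
Qed.

Lemma nowhere_dense_bigcup_fin (I : finType) (G : I -> set T) :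
  (forall i, nowhere_dense (G i)) -> nowhere_dense (\bigcup_i G i).
Proof.
move=> ndG; suff ndG_seq (s : seq I) :
    nowhere_dense [set y | exists2 i, i \in s & G i y].
  by apply: (nowhere_denseS _ (ndG_seq (enum I))) => y [i _ Gy]; exists i;
    rewrite ?mem_enum.
elim: s => [|i s IHs]; first by apply: (nowhere_denseS _ nowhere_dense0) => y [].
apply: (nowhere_denseS _ (nowhere_denseU (ndG i) IHs)).
by move=> y [j]; rewrite inE => /orP[/eqP ->|js] Gy; [left|right; exists j].
Qed.

Lemma closed_nowhere_dense (A : set T) :
  closed A -> A° = set0 -> nowhere_dense A.
Proof.
move=> cA A0 V oV [v Vv]; exists (V `&` ~` A); split => //.
  by apply: openI => //; rewrite openC.
apply/set0P/negP => /eqP VA.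
suff : A° v by rewrite A0.
apply: filterS (open_nbhs_nbhs (conj oV Vv)) => y Vy.
by apply: contrapT => nAy; have : (V `&` ~` A) y by []; rewrite VA.
Qed.

End NowhereDense.

Section MetricNowhereDense.
Context {R : realType} {X : pseudoMetricType R}.

Lemma nowhere_dense_preimage (g : X -> X) (S : set X) :
  homeomorphism g -> nowhere_dense S -> nowhere_dense (g @^-1` S).
Proof.
move=> [cg [h [gK hK ch]]] ndS V oV [v Vv].
have ohV : open (h @^-1` V) by apply: open_comp => // y _; exact: ch.
have [W [oW [w Ww] WV]] := ndS _ ohV (ex_intro _ (g v) (eq_ind_r V Vv (gK v))).
exists (g @^-1` W); split.
- by apply: open_comp => // y _; exact: cg.
- by exists (h w); rewrite /= hK.
- by move=> y /WV [/= Vhgy nSgy]; split => //; rewrite -(gK y).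
Qed.

Lemma nowhere_dense_ball {S : set X} (p : X) {r eps : R} :
  nowhere_dense S -> 0 < r -> 0 < eps ->
  exists q s, [/\ 0 < s, s <= eps & ball q (2 * s) `<=` ball p r `&` ~` S].
Proof.
move=> ndS r_gt0 eps_gt0.
have [W [oW [w Ww] WB]] := ndS _ (@open_interior _ (ball p r))
  (ex_intro _ p (nbhsx_ballx p r r_gt0)).
have [e e_gt0 BW] := (nbhs_ballP w W).1 (open_nbhs_nbhs (conj oW Ww)).
exists w, (Num.min (e / 2) eps); split.
- by rewrite lt_min divr_gt0.
- by rewrite ge_min lexx orbT.
- have le_e : 2 * Num.min (e / 2) eps <= e by rewrite -ler_pdivlMl // ge_min mulrC lexx.
  by move=> y /(le_ball le_e) /BW /WB [/interior_subset Bpy nSy].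
Qed.

End MetricNowhereDense.

Section Baire.
Context {R : realType} {X : completePseudoMetricType R}.

Lemma nested_balls_point (x : nat -> X) (r : nat -> R) :
  (forall n, 0 < r n) -> (forall n, r n.+1 <= n.+1%:R^-1) ->
  (forall n, ball (x n.+1) (2 * r n.+1) `<=` ball (x n) (r n)) ->
  exists l, forall n, ball (x n.+1) (2 * r n.+1) l.
Proof.
move=> r_gt0 r_small nested.
have nestedS n m : (n <= m)%N -> ball (x m) (r m) `<=` ball (x n) (r n).
  elim: m => [|m IHm]; first by rewrite leqn0 => /eqP ->.
  rewrite leq_eqVlt => /orP[/eqP -> //|/IHm sub] y Bmy; apply/sub/nested.
  by apply: le_ball Bmy; rewrite ler_peMl ?(ltW (r_gt0 _)) ?ler1n.
have x_in n m : (n <= m)%N -> ball (x n) (r n) (x m).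
  by move=> nm; apply: nestedS nm _ _; exact: ballxx.
have x_cvg : cvg (x @ \oo).
  apply: cauchy_cvg; apply: cauchy_exP => eps eps_gt0.
  exists (x (Num.truncn eps^-1).+1), (Num.truncn eps^-1).+1 => // m hm.
  apply: le_ball (x_in _ _ hm); apply: le_trans (r_small _) _.
  rewrite -[leRHS]invrK lef_pV2 ?posrE ?invr_gt0 ?ltr0n //.
  exact: ltW (truncnS_gt _).
exists (lim (x @ \oo)) => n.
have [M _ near_lim] := cvg_ball x_cvg (r_gt0 n.+1).
have /ball_sym Bl := near_lim _ (leq_maxl M n.+1).
have Bx := x_in n.+1 _ (leq_maxr M n.+1).
by rewrite mulr_natl mulr2n; exact: ball_triangle Bx Bl.
Qed.

Lemma interior_bigcup_nowhere_dense (C : nat -> set X) :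
  (forall n, nowhere_dense (C n)) -> (\bigcup_n C n)° = set0.
Proof.
move=> ndC; apply/seteqP; split => // u /nbhs_ballP [r0 r0_gt0 Bu] /=.
(* [choice] needs a step on all triples, so positivity of the radius is a premise. *)
have step (nq : nat * (X * R)) : exists q' : X * R, 0 < nq.2.2 ->
    [/\ 0 < q'.2, q'.2 <= nq.1.+1%:R^-1 &
        ball q'.1 (2 * q'.2) `<=` ball nq.2.1 nq.2.2 `&` ~` C nq.1].
  case: nq => n [p r] /=; have [r_gt0|r_le0] := ltP 0 r; last first.
    by exists (p, r) => /=; rewrite ltNge r_le0.
  have eps_gt0 : 0 < n.+1%:R^-1 :> R by rewrite invr_gt0 ltr0n.
  have [q [s Hqs]] := nowhere_dense_ball p (ndC n) r_gt0 eps_gt0.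
  by exists (q, s).
have [next Hnext] := choice step.
pose fix qr n := if n is m.+1 then next (m, qr m) else (u, r0).
have r_gt0 n : 0 < (qr n).2.
  by elim: n => [|n IHn] //; have [] := Hnext (n, qr n) IHn.
have Hqr n := Hnext (n, qr n) (r_gt0 n).
have [l Bl] : exists l, forall n, ball (qr n.+1).1 (2 * (qr n.+1).2) l.
  apply: (@nested_balls_point (fun n => (qr n).1) (fun n => (qr n).2)) => //.
    by move=> n; have [] := Hqr n.
  by move=> n y By; have [_ _ /(_ y By) []] := Hqr n.
have [_ _ /(_ l (Bl 0%N)) [/Bu [k _ Ckl] _]] := Hqr 0%N.
by have [_ _ /(_ l (Bl k)) []] := Hqr k.
Qed.

End Baire.

Section FastBasin.
Context {R : realType} {X : pseudoMetricType R} {N : nat} (f : 'I_N -> X -> X).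

Lemma Fstar_subset (S S' : set X) : S `<=` S' -> Fstar f S `<=` Fstar f S'.
Proof. by move=> SS' y [i _ Sfy]; exists i => //; exact: SS'. Qed.

Lemma Fimg_sub_Fstar {A : set X} : Fimg f A = A -> A `<=` Fstar f A.
Proof.
move=> FA a Aa; have [i _ _] : Fimg f A a by rewrite FA.
by exists i => //=; rewrite -FA; exists i => //; exists a.
Qed.

Lemma iter_Fstar_fword (w : nat -> 'I_N) (S : set X) k x :
  S (fword f w k x) -> iter k (Fstar f) S x.
Proof. by elim: k x => [|k IHk] x //= /IHk; exists (w k). Qed.

Context {A : set X}.
Hypothesis AF : A `<=` Fstar f A.

Lemma iter_Fstar_subS k : iter k (Fstar f) A `<=` iter k.+1 (Fstar f) A.
Proof. by elim: k => [|k IHk] //=; exact: Fstar_subset. Qed.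

Lemma Fstar_fast_basin : Fstar f (fast_basin f A) = fast_basin f A.
Proof.
apply/seteqP; split => y.
  by move=> [i _ [k _ Hk]]; exists k.+1 => //; exists i.
by move=> [k _ /iter_Fstar_subS [i _ Hi]]; exists i => //; exists k.
Qed.

Lemma fast_basin_bigcap :
  fast_basin f A = \bigcap_(D in [set D | Fstar f D = D /\ A `<=` D]) D.
Proof.
apply/seteqP; split => y; last first.
  by apply; split; [exact: Fstar_fast_basin | move=> a Aa; exists 0%N].
move=> [k _ Hk] D [FD AD]; elim: k y Hk => [|k IHk] //= y.
by rewrite -FD; exact: Fstar_subset.
Qed.

End FastBasin.

Section Attractor.
Context {R : realType} {X : completePseudoMetricType R} {N : nat}.
Variables (f : 'I_N -> X -> X) (A : set X).

Lemma backward_orbit {a : X} : Fimg f A = A -> A a ->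
  exists (w : nat -> 'I_N) (p : nat -> X),
    (forall k, A (p k)) /\ forall k, fword f w k (p k) = a.
Proof.
move=> FA Aa; have [i0 _ _] : Fimg f A a by rewrite FA.
have pre y : exists q : 'I_N * X, A y -> A q.2 /\ f q.1 q.2 = y.
  have [Ay|nAy] := pselect (A y); last by exists (i0, y) => /nAy.
  by move: Ay; rewrite -{1}FA => -[i _ [z Az <-]]; exists (i, z).
have [h Hh] := choice pre.
pose fix p k := if k is m.+1 then (h (p m)).2 else a.
have pA k : A (p k) by elim: k => [|k IHk] //=; have [] := Hh _ IHk.
exists (fun k => (h (p k)).1), p; split => // k.
by elim: k => [|k IHk] //=; have [_ ->] := Hh _ (pA k).
Qed.

Lemma basin_sub_fast_basin : is_attractor f A -> point_fibred f A ->
  A° !=set0 -> basin f A `<=` fast_basin f A.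
Proof.
move=> [[_ cA] FA [U [oU AU attrU]]] pfA [a Aa] x [V attrV Vx].
have [r r_gt0 BrA] := (nbhs_ballP a A).1 Aa.
have [w [p [pA pw]]] := backward_orbit FA (interior_subset Aa).
have [xw Hxw] := pfA w.
have AxB : A `|` [set x] `<=` basin f A.
  by move=> y [Ay|->]; [exists U => //; exact: AU | exists V].
have Ax_cpt : nonempty_compact (A `|` [set x]).
  by split; [exists a; left; exact: interior_subset | exact/compactU/compact_set1].
have [M _ HM] := Hxw _ Ax_cpt AxB _ (divr_gt0 r_gt0 (ltr0n _ 2)).
have [near_xw _] := HM M (leqnn M).
have [_ -> Bxp] := near_xw (fword f w M (p M)) (ex_intro2 _ _ _ (or_introl (pA M)) erefl).
have [_ -> Bxx] := near_xw (fword f w M x) (ex_intro2 _ _ x (or_intror erefl) erefl).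
exists M => //; apply: (iter_Fstar_fword f w); apply: BrA.
by have := ball_triangle (ball_sym Bxp) Bxx; rewrite pw -splitr.
Qed.

Lemma fast_basin_interior0 : (forall i, homeomorphism (f i)) ->
  closed A -> A° = set0 -> (fast_basin f A)° = set0.
Proof.
move=> homf cA A0; apply: interior_bigcup_nowhere_dense => k.
elim: k => [|k IHk] /=; first exact: closed_nowhere_dense.
by apply: nowhere_dense_bigcup_fin => i; exact: nowhere_dense_preimage.
Qed.

End Attractor.

Theorem mainTheorem5 (R : realType) (X : completePseudoMetricType R)
  (HX : hausdorff_space X) (N : nat) (f : 'I_N -> X -> X)
  (Hf : forall i, homeomorphism (f i)) (A : set X)
  (HA : is_attractor f A) (Hpf : point_fibred f A) :
  [/\ Fstar f (fast_basin f A) = fast_basin f A,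
      fast_basin f A = \bigcap_(D in [set D | Fstar f D = D /\ A `<=` D]) D,
      A° !=set0 -> basin f A `<=` fast_basin f A &
      A° = set0 -> (fast_basin f A)° = set0].
Proof.
have [[_ cA] FA _] := HA.
have AF := Fimg_sub_Fstar f FA.
split.
- exact: Fstar_fast_basin AF.
- exact: fast_basin_bigcap AF.
- exact: basin_sub_fast_basin.
- exact: fast_basin_interior0 Hf (compact_closed HX cA).
Qed.
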